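(* Let $\Sigma\in\mathbb{R}^{n\times n}$ be symmetric positive definite, let $C_0\in\mathbb{R}^{n\times n}$ be symmetric positive semidefinite, and define $C_{i+1}=\Sigma-\Sigma(C_i+\Sigma)^{-1}\Sigma$ for $i\ge0$. If $\tilde w\ne0$ and $\tilde\delta_i$ satisfy $C_i\tilde w=\tilde\delta_i\Sigma\tilde w$, then $C_{i+1}\tilde w=\tilde\delta_{i+1}\Sigma\tilde w$ with $\tilde\delta_{i+1}=\tilde\delta_i/(1+\tilde\delta_i)$.
   Context: In the paper $C_0=H\Gamma_0H^\top$, where $\Gamma_0$ is the empirical covariance of the initial EKI ensemble and $H$ is the linear observation operator; $C_i$ is an idealized observation-space covariance for stochastic EKI. *)

From mathcomp Require Import all_boot all_order all_algebra.
Set Implicit Arguments. Unset Strict Implicit. Unset Printing Implicit Defensive.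
Import Order.TTheory GRing.Theory Num.Theory.
Local Open Scope ring_scope.

Definition symmetric_mx (R : ringType) (n : nat) (A : 'M[R]_n) : Prop := A^T = A.

Definition posdef_mx (R : realFieldType) (n : nat) (A : 'M[R]_n) : Prop :=
  symmetric_mx A /\ forall x : 'cV[R]_n, x != 0 -> 0 < (x^T *m A *m x) 0 0.

Definition psd_mx (R : realFieldType) (n : nat) (A : 'M[R]_n) : Prop :=
  symmetric_mx A /\ forall x : 'cV[R]_n, 0 <= (x^T *m A *m x) 0 0.

Fixpoint Cseq (R : realFieldType) (n : nat) (Sigma C0 : 'M[R]_n) (i : nat) : 'M[R]_n :=
  match i with
  | 0 => C0
  | i'.+1 => Sigma - Sigma *m invmx (Cseq Sigma C0 i' + Sigma) *m Sigma
  end.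

(* For positive definite Sigma and positive semidefinite C, C + Sigma is
   invertible and Sigma - Sigma (C + Sigma)^-1 Sigma (the parallel sum of C and
   Sigma) is again positive semidefinite, so every C_i is positive
   semidefinite and every inverse in the recursion is a true inverse.  If
   C w = delta Sigma w then (C + Sigma) w = (1 + delta) Sigma w; invertibility
   and w != 0 force 1 + delta != 0, hence (C + Sigma)^-1 Sigma w = w / (1 + delta)
   and C_(i+1) w = Sigma w - Sigma w / (1 + delta). *)

From mathcomp Require Import all_boot all_order all_algebra.
From mathcomp Require Import ring.
Import Order.TTheory GRing.Theory Num.Theory.
Set Implicit Arguments. Unset Strict Implicit.
Local Open Scope ring_scope.

Definition parallel_sum (R : fieldType) (n : nat) (C S : 'M[R]_n) : 'M[R]_n :=
  S - S *m invmx (C + S) *m S.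

Lemma CseqS (R : realFieldType) (n : nat) (Sigma C0 : 'M[R]_n) (i : nat) :
  Cseq Sigma C0 i.+1 = parallel_sum (Cseq Sigma C0 i) Sigma.
Proof. by []. Qed.

Section ParallelSumEigen.
Variables (R : fieldType) (n : nat).
Implicit Types (C S : 'M[R]_n) (w : 'cV[R]_n).

Lemma parallel_sum_eigen C S w (delta : R) :
  C + S \in unitmx -> w != 0 -> C *m w = delta *: (S *m w) ->
  parallel_sum C S *m w = (delta / (1 + delta)) *: (S *m w).
Proof.
move=> CSu w_neq0 Cw.
have CSw : (C + S) *m w = (1 + delta) *: (S *m w).
  by rewrite mulmxDl Cw scalerDl scale1r addrC.
have delta1_neq0 : 1 + delta != 0.
  apply: contraNneq w_neq0 => delta1_eq0.
  by rewrite -(mulKmx CSu w) CSw delta1_eq0 scale0r mulmx0.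
have invCS_Sw : invmx (C + S) *m (S *m w) = (1 + delta)^-1 *: w.
  by rewrite -[w in RHS](mulKmx CSu) CSw scalemxAr scalerA mulVf // scale1r.
rewrite /parallel_sum mulmxBl -!mulmxA invCS_Sw -scalemxAr.
rewrite -{1}[S *m w]scale1r -scalerBl; congr (_ *: _).
by field.
Qed.

End ParallelSumEigen.

Section PositiveMatrices.
Variables (R : realFieldType) (n : nat).
Implicit Types (A C S : 'M[R]_n) (x : 'cV[R]_n).

Definition quad_form A x : R := (x^T *m A *m x) 0 0.

Lemma quad_formD A B x : quad_form (A + B) x = quad_form A x + quad_form B x.
Proof. by rewrite /quad_form mulmxDr mulmxDl mxE. Qed.

Lemma quad_form0 A : quad_form A 0 = 0.
Proof. by rewrite /quad_form mulmx0 mxE. Qed.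

Lemma posdef_psd A : posdef_mx A -> psd_mx A.
Proof.
move=> [A_sym A_pos]; split=> // x.
by have [->|/A_pos/ltW//] := eqVneq x 0; rewrite -/(quad_form A 0) quad_form0.
Qed.

Lemma psd_posdefD C S : psd_mx C -> posdef_mx S -> posdef_mx (C + S).
Proof.
move=> [C_sym C_nneg] [S_sym S_pos]; split=> [|x x_neq0].
  by rewrite /symmetric_mx linearD /= C_sym S_sym.
by rewrite -/(quad_form _ x) quad_formD ltr_wpDl ?C_nneg ?S_pos.
Qed.

Lemma posdef_unitmx A : posdef_mx A -> A \in unitmx.
Proof.
move=> [A_sym A_pos]; rewrite -unitmx_tr -row_free_unit.
apply: inj_row_free => v; rewrite A_sym => vA0.
apply/eqP; apply: contraT => v_neq0.
by have := A_pos v^T; rewrite trmx_eq0 trmxK vA0 mul0mx mxE ltxx => /(_ v_neq0).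
Qed.

Lemma symmetric_parallel_sum C S :
  symmetric_mx C -> symmetric_mx S -> symmetric_mx (parallel_sum C S).
Proof.
move=> C_sym S_sym.
rewrite /symmetric_mx linearB /= !trmx_mul trmx_inv linearD /=.
by rewrite C_sym S_sym mulmxA.
Qed.

Lemma psd_parallel_sum C S :
  psd_mx C -> posdef_mx S -> psd_mx (parallel_sum C S).
Proof.
move=> C_psd S_posdef; have [C_sym C_nneg] := C_psd.
have [S_sym S_nneg] := posdef_psd S_posdef.
have CSu : C + S \in unitmx by exact/posdef_unitmx/psd_posdefD.
split=> [|x]; first exact: symmetric_parallel_sum.
(* With x = a + b and C b = S a, the form is a^T S a + b^T C b. *)
set b := invmx (C + S) *m S *m x; set a := x - b.
have CSb : (C + S) *m b = S *m x by rewrite /b -mulmxA mulKVmx.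
have Cb : C *m b = S *m a by rewrite /a mulmxBr -CSb mulmxDl addrK.
have Px : parallel_sum C S *m x = S *m a.
  by rewrite /parallel_sum /a mulmxBl mulmxBr /b !mulmxA.
have x_ab : x = a + b by rewrite /a subrK.
clearbody a b.
rewrite -mulmxA Px {1}x_ab linearD mulmxDl mxE -{2}Cb !mulmxA.
by apply: addr_ge0; [exact: S_nneg | exact: C_nneg].
Qed.

End PositiveMatrices.

Lemma Cseq_psd (R : realFieldType) (n : nat) (Sigma C0 : 'M[R]_n) (i : nat) :
  posdef_mx Sigma -> psd_mx C0 -> psd_mx (Cseq Sigma C0 i).
Proof.
by move=> Sigma_posdef C0_psd; elim: i => [|i IH] //; exact: psd_parallel_sum.
Qed.

Theorem proposition4p2 (R : realFieldType) (n : nat) (Sigma C0 : 'M[R]_n)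
  (i : nat) (w : 'cV[R]_n) (delta : R) :
  posdef_mx Sigma -> psd_mx C0 ->
  w != 0 ->
  Cseq Sigma C0 i *m w = delta *: (Sigma *m w) ->
  Cseq Sigma C0 i.+1 *m w = (delta / (1 + delta)) *: (Sigma *m w).
Proof.
move=> Sigma_posdef C0_psd w_neq0 Ciw.
have Ci_psd := Cseq_psd i Sigma_posdef C0_psd.
have CiSu : Cseq Sigma C0 i + Sigma \in unitmx.
  exact/posdef_unitmx/psd_posdefD.
by rewrite CseqS (parallel_sum_eigen CiSu w_neq0 Ciw).
Qed.
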